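(* Let $k\geq3$, $A=\{0,1,\dots,k-1\}$, $N=k-1$ and let $T\colon A^{N^2}\to A$ be given by $T(x_{1,1},\dots,x_{1,N},\dots,x_{N,1},\dots,x_{N,N})=1$ if $x_{i,j}=i$ for all $i,j$ or $x_{i,j}=j$ for all $i,j$, and $0$ otherwise. For $j\in A$ and $a\in A$ let $u_{j,a}\colon A\to A$ be given by $u_{j,a}(x)=a$ if $x=j$ and $u_{j,a}(x)=0$ otherwise. Then \[\{T\}^{*(1)}\supseteq\{u_{j,a} : a\in A,\ j\in A\setminus\{0,1\}\}.\]
   Context: An $m$-ary $g$ commutes with an $n$-ary $h$ if $g\bigl((h((x_{ij})_{j}))_{i}\bigr)=h\bigl((g((x_{ij})_{i}))_{j}\bigr)$ for all $(x_{ij})\in A^{m\times n}$. For $F$ a set of finitary operations on $A$, $F^*$ is the set of all finitary operations of positive arity commuting with every member of $F$, and $F^{*(1)}$ is the set of unary members of $F^*$. *)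

From mathcomp Require Import all_boot.
Set Implicit Arguments. Unset Strict Implicit. Unset Printing Implicit Defensive.

Definition op (A : Type) (m : nat) := ('I_m -> A) -> A.

Definition commutes (A : Type) (m n : nat) (g : op A m) (h : op A n) : Prop :=
  forall x : 'I_m -> 'I_n -> A,
    g (fun i => h (fun j => x i j)) = h (fun j => g (fun i => x i j)).

Definition opset (A : Type) := {m : nat & op A m} -> Prop.

Definition centralizer (A : Type) (F : opset A) : opset A :=
  fun p => 0 < projT1 p /\ forall q, F q -> commutes (projT2 p) (projT2 q).

Definition centralizer1 (A : Type) (F : opset A) : opset A :=
  fun p => centralizer F p /\ projT1 p = 1.

(* Here A = {0,...,k-1} = 'I_k with k = n.+1, so N = k - 1 = n. *)

(* T : A^(N^2) -> A; the argument index t : 'I_(n*n) encodes the pair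
   (i, j) = (t %/ n + 1, t %% n + 1), i.e. the row-major order
   x_{1,1},...,x_{1,N},...,x_{N,1},...,x_{N,N}. *)
Definition Top (n : nat) : op 'I_n.+1 (n * n) := fun x =>
  if [forall t : 'I_(n * n), nat_of_ord (x t) == (t %/ n).+1]
     || [forall t : 'I_(n * n), nat_of_ord (x t) == (t %% n).+1]
  then inord 1 else inord 0.

Definition uop (n : nat) (j a : 'I_n.+1) : op 'I_n.+1 1 := fun x =>
  if x ord0 == j then a else ord0.

From mathcomp Require Import all_boot.

(* T only takes the values 0 and 1, which u_{j,a} (j >= 2) sends to 0.
   Conversely, u_{j,a} turns every argument of T into a tuple taking at most
   one nonzero value, whereas both patterns accepted by T take the two
   distinct nonzero values 1 and 2 (at positions (1,1),(2,1), resp.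
   (1,1),(1,2)); so T also returns 0 there. *)

Section TopCentralizer.

Variable n : nat.
Hypothesis n_ge2 : 2 <= n.

Local Notation A := 'I_n.+1.

Lemma Top_le1 (x : 'I_(n * n) -> A) : Top x <= 1.
Proof. by rewrite /Top; case: ifP => _; rewrite inordK // ltnS (leq_trans _ n_ge2). Qed.

Lemma Top_eq0 (x : 'I_(n * n) -> A) :
  (forall s t, 0 < x s -> 0 < x t -> x s = x t) -> Top x = ord0.
Proof.
move=> x_nz_const; rewrite /Top.
case: ifP => [|_]; last by apply: val_inj; rewrite /= inordK.
have n_gt0 : 0 < n by apply: leq_trans n_ge2.
have t0 : 0 < n * n by rewrite muln_gt0 n_gt0.
have t1 : 1 < n * n by apply: leq_trans (leq_mul n_ge2 n_ge2).
have tn : n < n * n by rewrite -{1}(muln1 n) ltn_pmul2l.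
have no_1_2 s t : nat_of_ord (x s) = 1 -> nat_of_ord (x t) = 2 -> False.
  move=> xs1 xt2; move: (x_nz_const s t); rewrite xs1 xt2 => /(_ isT isT).
  by move/(congr1 val) => /=; rewrite xs1 xt2.
case/orP => /forallP x_pat; exfalso.
- apply: (no_1_2 (Ordinal t0) (Ordinal tn)); apply/eqP.
    by have := x_pat (Ordinal t0); rewrite /= div0n.
  by have := x_pat (Ordinal tn); rewrite /= divnn n_gt0.
- apply: (no_1_2 (Ordinal t0) (Ordinal t1)); apply/eqP.
    by have := x_pat (Ordinal t0); rewrite /= mod0n.
  by have := x_pat (Ordinal t1); rewrite /= modn_small.
Qed.

Lemma commutes_Top (g : op A 1) :
  (forall x : 'I_1 -> A, x ord0 <= 1 -> g x = ord0) ->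
  (forall x y : 'I_1 -> A, 0 < g x -> 0 < g y -> g x = g y) ->
  commutes g (@Top n).
Proof.
move=> g_01 g_nz_const x /=.
rewrite g_01 ?Top_le1 // Top_eq0 // => s t; exact: g_nz_const.
Qed.

End TopCentralizer.

Lemma uop_eq0 (n : nat) (j a : 'I_n.+1) x : x ord0 != j -> uop j a x = ord0.
Proof. by rewrite /uop => /negbTE ->. Qed.

Lemma uop_nz_const (n : nat) (j a : 'I_n.+1) x y :
  0 < uop j a x -> 0 < uop j a y -> uop j a x = uop j a y.
Proof. by rewrite /uop; do 2 case: ifP. Qed.

Theorem corollary3p3 (n : nat) (hk : 3 <= n.+1) :
  forall (j a : 'I_n.+1), 2 <= nat_of_ord j ->
    centralizer1 (fun q => q = existT (op 'I_n.+1) (n * n) (@Top n))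
                 (existT (op 'I_n.+1) 1 (uop j a)).
Proof.
move=> j a j_ge2; split=> //; split=> // _ -> /=.
apply: commutes_Top => // [x x_le1|]; last exact: uop_nz_const.
by apply: uop_eq0; apply: contraTneq j_ge2 => <-; rewrite -ltnNge ltnS.
Qed.
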